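(* Let $G_1,G_2$ be finite connected bipartite $\mathcal{C}$-$\mathrm{HH}$ graphs which both satisfy property (B2). Then: (i) if $\Delta(G_1)\le\Delta(G_2)$, then $G_1$ is $\mathcal{C}$-$\mathrm{HH}$-morphic to $G_2$; (ii) if $\Delta(G_1)=\Delta(G_2)$, then $G_1,G_2$ are $\mathcal{C}$-$\mathrm{HH}$-symmetric; (iii) if $\Delta(G_1)>\Delta(G_2)$ and $G_2$ satisfies property (B2* ), then $G_1,G_2$ are $\mathcal{C}$-$\mathrm{HH}$-symmetric.
   Context: $\Delta(G)$ is the maximum degree. For a connected bipartite graph $G$ with bipartition $(X,Y)$: property (B2) means that for each $k\le\Delta(G)$ every $k$-element subset of $X$ and every $k$-element subset of $Y$ has a common neighbour (a vertex adjacent to all its elements); property (B2* ) means that some vertex is adjacent to all of $X$ and some vertex is adjacent to all of $Y$. Subgraphs are induced; a homomorphism maps edges to edges. A graph $G$ is $\mathcal{C}$-$\mathrm{HH}$ if every homomorphism from a finite connected induced subgraph of $G$ into $G$ extends to a homomorphism $G\to G$. $G_1$ is $\mathcal{C}$-$\mathrm{HH}$-morphic to $G_2$ if every homomorphism from a finite connected induced subgraph $A$ of $G_1$ onto an induced subgraph $B$ of $G_2$ extends to a homomorphism $G_1\to G_2$; $G_1,G_2$ are $\mathcal{C}$-$\mathrm{HH}$-symmetric if each is $\mathcal{C}$-$\mathrm{HH}$-morphic to the other. *)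

From mathcomp Require Import all_boot.
Set Implicit Arguments. Unset Strict Implicit. Unset Printing Implicit Defensive.

Definition simple_graph (V : finType) (e : rel V) : Prop :=
  symmetric e /\ irreflexive e.

Definition connected_on (V : finType) (e : rel V) (A : {set V}) : Prop :=
  A != set0 /\
  forall x y, x \in A -> y \in A ->
    connect [rel u v | [&& u \in A, v \in A & e u v]] x y.

Definition connected_graph (V : finType) (e : rel V) : Prop :=
  connected_on e [set: V].

Definition bipartition (V : finType) (e : rel V) (X Y : {set V}) : Prop :=
  X :&: Y = set0 /\ X :|: Y = [set: V] /\
  forall u v, e u v -> (u \in X) && (v \in Y) || (u \in Y) && (v \in X).

Definition nbhd (V : finType) (e : rel V) (v : V) : {set V} := [set w | e v w].

Definition max_deg (V : finType) (e : rel V) : nat := \max_(v : V) #|nbhd e v|.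

Definition common_nbr (V : finType) (e : rel V) (S : {set V}) (z : V) : bool :=
  [forall s in S, e s z].

Definition B2 (V : finType) (e : rel V) (X Y : {set V}) : Prop :=
  forall k, k <= max_deg e ->
    (forall S : {set V}, S \subset X -> #|S| = k -> exists z, common_nbr e S z) /\
    (forall S : {set V}, S \subset Y -> #|S| = k -> exists z, common_nbr e S z).

Definition B2star (V : finType) (e : rel V) (X Y : {set V}) : Prop :=
  (exists z, common_nbr e X z) /\ (exists z, common_nbr e Y z).

Definition hom_on (V1 V2 : finType) (e1 : rel V1) (e2 : rel V2)
  (A : {set V1}) (f : V1 -> V2) : Prop :=
  forall x y, x \in A -> y \in A -> e1 x y -> e2 (f x) (f y).

Definition hom (V1 V2 : finType) (e1 : rel V1) (e2 : rel V2) (f : V1 -> V2) : Prop :=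
  forall x y, e1 x y -> e2 (f x) (f y).

(* G1 is C-HH-morphic to G2: every homomorphism from a finite connected induced
   subgraph A of G1 onto an induced subgraph B of G2 (B is the induced subgraph
   on the image f @: A) extends to a homomorphism G1 -> G2. *)
Definition CHH_morphic (V1 V2 : finType) (e1 : rel V1) (e2 : rel V2) : Prop :=
  forall (A : {set V1}) (B : {set V2}) (f : V1 -> V2),
    connected_on e1 A -> hom_on e1 e2 A f -> f @: A = B ->
    exists g : V1 -> V2, hom e1 e2 g /\ {in A, forall x, g x = f x}.

Definition CHH (V : finType) (e : rel V) : Prop := CHH_morphic e e.

Definition CHH_symmetric (V1 V2 : finType) (e1 : rel V1) (e2 : rel V2) : Prop :=
  CHH_morphic e1 e2 /\ CHH_morphic e2 e1.

From mathcomp Require Import all_boot.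
Set Implicit Arguments. Unset Strict Implicit. Unset Printing Implicit Defensive.

(* A homomorphism from a connected induced subgraph A of a bipartite graph G1
   into a bipartite graph G2 either preserves or swaps the two sides on A.
   It then extends to all of G1 one vertex v at a time: the images of the
   already mapped neighbours of v all lie on one side of G2 and there are at
   most Delta(G1) of them, so a common neighbour exists as soon as every set of
   at most Delta(G1) vertices on one side of G2 has one; such a common neighbour
   automatically lies on the side required for v.  Property (B2) of G2 gives
   this when Delta(G1) <= Delta(G2), and (B2-star) gives it unconditionally. *)

Definition bicolouring (V : finType) (e : rel V) (X : {set V}) : Prop :=
  forall u v, e u v -> (u \in X) = (v \notin X).

Definition side_common_nbrs (V : finType) (e : rel V) (X : {set V}) (k : nat) :=
  forall S : {set V}, (S \subset X) || (S \subset ~: X) -> #|S| <= k ->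
    exists z, common_nbr e S z.

Lemma in_nbhd (V : finType) (e : rel V) (v w : V) : (w \in nbhd e v) = e v w.
Proof. by rewrite inE. Qed.

Lemma card_nbhd_leq_max_deg (V : finType) (e : rel V) (v : V) :
  #|nbhd e v| <= max_deg e.
Proof. exact: (leq_bigmax v). Qed.

Lemma max_deg_eq0 (V : finType) (e : rel V) (x y : V) :
  max_deg e = 0 -> e x y = false.
Proof.
move=> deg0; apply/negbTE; have := card_nbhd_leq_max_deg e x.
rewrite deg0 leqn0 cards_eq0 => /eqP nbhd0.
by rewrite -in_nbhd nbhd0 inE.
Qed.

Lemma common_nbr_subset (V : finType) (e : rel V) (S T : {set V}) (z : V) :
  S \subset T -> common_nbr e T z -> common_nbr e S z.
Proof.
by move=> /subsetP sST /forall_inP cT; apply/forall_inP => s /sST; apply: cT.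
Qed.

Section Bipartition.

Variables (V : finType) (e : rel V) (X Y : {set V}).
Hypothesis bip : bipartition e X Y.

Lemma bipartition_setC : ~: X = Y.
Proof.
have [XY0 [XYT _]] := bip; apply/setP => y.
have : y \in X :|: Y by rewrite XYT inE.
have : y \notin X :&: Y by rewrite XY0 inE.
by rewrite !inE; case: (y \in X); case: (y \in Y).
Qed.

Lemma bipartition_bicolouring : bicolouring e X.
Proof.
move=> u v euv; have [_ [_ /(_ u v euv)]] := bip.
by rewrite -bipartition_setC !inE; case: (u \in X); case: (v \in X).
Qed.

Lemma B2_side_common_nbrs : B2 e X Y -> side_common_nbrs e X (max_deg e).
Proof.
move=> hB2 S side cardS; have [hX hY] := hB2 _ cardS.
case/orP: side => sub; first exact: hX sub erefl.
by apply: hY erefl; rewrite -bipartition_setC.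
Qed.

Lemma B2star_side_common_nbrs : B2star e X Y -> forall k, side_common_nbrs e X k.
Proof.
move=> [[zX cX] [zY cY]] k S /orP[sub | sub] _.
  by exists zX; exact: common_nbr_subset cX.
by exists zY; apply: common_nbr_subset cY; rewrite -bipartition_setC.
Qed.

End Bipartition.

Lemma side_common_nbrs_leq (V : finType) (e : rel V) (X : {set V}) k m :
  k <= m -> side_common_nbrs e X m -> side_common_nbrs e X k.
Proof. by move=> le_km cn S side cardS; apply: cn side (leq_trans cardS le_km). Qed.

(* The empty set and a singleton give a vertex and one of its neighbours, one
   on each side. *)
Lemma side_common_nbrs_colour (V : finType) (e : rel V) (X : {set V}) k c :
  0 < k -> bicolouring e X -> side_common_nbrs e X k -> exists z, (z \in X) = c.
Proof.
move=> k_gt0 col cn.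
have [z0 _] : exists z, common_nbr e set0 z by apply: cn; rewrite ?sub0set ?cards0.
have [z1 /forall_inP/(_ z0 (set11 z0)) ez01] : exists z, common_nbr e [set z0] z.
  by apply: cn; rewrite ?cards1 // !sub1set inE orbN.
have := col _ _ ez01.
case: c; case z0X: (z0 \in X) => z1X; [exists z0 | exists z1 | exists z1 | exists z0];
  by rewrite // -[LHS]negbK -z1X.
Qed.

Lemma hom_on_connected_aligned (V1 V2 : finType) (e1 : rel V1) (e2 : rel V2)
    (X1 : {set V1}) (X2 : {set V2}) (A : {set V1}) (f : V1 -> V2) :
  bicolouring e1 X1 -> bicolouring e2 X2 ->
  connected_on e1 A -> hom_on e1 e2 A f ->
  exists b, {in A, forall x, (f x \in X2) = (x \in X1) (+) b}.
Proof.
move=> col1 col2 [/set0Pn[a aA] Acon] fhom.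
exists ((f a \in X2) (+) (a \in X1)) => x xA.
pose aligned := [pred y | (f y \in X2) (+) (y \in X1) == (f a \in X2) (+) (a \in X1)].
have closed_aligned :
    closed [rel u v | [&& u \in A, v \in A & e1 u v]] aligned.
  move=> u v /and3P[uA vA euv]; rewrite !inE.
  by rewrite (col2 _ _ (fhom _ _ uA vA euv)) (col1 _ _ euv) addNb addbN negbK.
have := closed_connect closed_aligned (Acon a x aA xA).
rewrite !inE eqxx => /esym/eqP <-.
by case: (f x \in X2); case: (x \in X1).
Qed.

Section HomExtension.

Variables (V1 V2 : finType) (e1 : rel V1) (e2 : rel V2).
Variables (X1 : {set V1}) (X2 : {set V2}).
Hypotheses (sym1 : symmetric e1) (irr1 : irreflexive e1) (sym2 : symmetric e2).
Hypotheses (col1 : bicolouring e1 X1) (col2 : bicolouring e2 X2).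
Hypothesis cn : side_common_nbrs e2 X2 (max_deg e1).
Hypothesis max_deg1_gt0 : 0 < max_deg e1.

Lemma colour_common_nbr (S : {set V2}) c :
  {in S, forall s, (s \in X2) = ~~ c} -> #|S| <= max_deg e1 ->
  exists2 z, common_nbr e2 S z & (z \in X2) = c.
Proof.
move=> S_colour cardS; case: (set_0Vmem S) => [-> | [s0 s0S]].
  have [z zc] := side_common_nbrs_colour c max_deg1_gt0 col2 cn.
  by exists z => //; apply/forall_inP => s; rewrite inE.
have side : (S \subset X2) || (S \subset ~: X2).
  by apply/orP; case: c S_colour => S_colour; [right | left];
    apply/subsetP => s /S_colour; rewrite ?inE => ->.
have [z zc] := cn side cardS; exists z => //.
by apply: negb_inj; rewrite -(col2 (forall_inP zc s0 s0S)) S_colour.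
Qed.

Lemma hom_on_extend1 (D : {set V1}) (g : V1 -> V2) (v : V1) b :
  v \notin D -> hom_on e1 e2 D g ->
  {in D, forall x, (g x \in X2) = (x \in X1) (+) b} ->
  exists g', [/\ hom_on e1 e2 (v |: D) g', {in D, g' =1 g} &
                 {in v |: D, forall x, (g' x \in X2) = (x \in X1) (+) b}].
Proof.
move=> vD ghom galign; pose S := g @: (D :&: nbhd e1 v).
have S_colour : {in S, forall s, (s \in X2) = ~~ ((v \in X1) (+) b)}.
  move=> s /imsetP[x /setIP[xD]]; rewrite in_nbhd => evx ->.
  by rewrite galign // (@col1 x v) ?addNb // sym1.
have cardS : #|S| <= max_deg e1.
  apply: leq_trans (leq_imset_card _ _) _.
  exact: leq_trans (subset_leq_card (subsetIr _ _)) (card_nbhd_leq_max_deg _ _).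
have [z zc zcol] := colour_common_nbr S_colour cardS.
exists (fun x => if x \in D then g x else z); split.
- move=> x y /setU1P[-> | xD] /setU1P[-> | yD] exy; rewrite ?(negbTE vD) ?xD ?yD.
  + by rewrite irr1 in exy.
  + by rewrite sym2; apply: (forall_inP zc); apply: imset_f; rewrite inE yD in_nbhd.
  + by apply: (forall_inP zc); apply: imset_f; rewrite inE xD in_nbhd sym1.
  + exact: ghom.
- by move=> x /= ->.
- by move=> x /setU1P[-> | xD]; rewrite ?(negbTE vD) ?xD //; apply: galign.
Qed.

Lemma hom_on_extend (D : {set V1}) (g : V1 -> V2) b :
  hom_on e1 e2 D g -> {in D, forall x, (g x \in X2) = (x \in X1) (+) b} ->
  exists g', hom e1 e2 g' /\ {in D, g' =1 g}.
Proof.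
have [n] := ubnP #|~: D|; elim: n D g => [|n IH] D g; first by rewrite ltn0.
rewrite ltnS => cardCD ghom galign.
case: (set_0Vmem (~: D)) => [CD0 | [v]].
  have DT : D = setT by rewrite -(setCK D) CD0 setC0.
  by exists g; split => // x y; apply: ghom; rewrite DT inE.
rewrite inE => vD; have [g' [g'hom g'g g'align]] := hom_on_extend1 vD ghom galign.
have cardCvD : #|~: (v |: D)| < n.
  apply: leq_trans (proper_card _) cardCD.
  by rewrite properC properEcard subsetUr cardsU1 vD add1n ltnSn.
have [h [hhom hg']] := IH _ _ cardCvD g'hom g'align.
by exists h; split => // x xD; rewrite hg' ?g'g ?setU1r.
Qed.

End HomExtension.


Theorem CHH_morphic_of_side_common_nbrs (V1 V2 : finType)
    (e1 : rel V1) (e2 : rel V2) (X1 : {set V1}) (X2 : {set V2}) :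
  symmetric e1 -> irreflexive e1 -> symmetric e2 ->
  bicolouring e1 X1 -> bicolouring e2 X2 ->
  side_common_nbrs e2 X2 (max_deg e1) -> CHH_morphic e1 e2.
Proof.
move=> sym1 irr1 sym2 col1 col2 cn A B f Acon fhom _.
case: (posnP (max_deg e1)) => [deg0 | deg_gt0].
  by exists f; split => // x y; rewrite max_deg_eq0.
have [b falign] := hom_on_connected_aligned col1 col2 Acon fhom.
have [g [ghom gf]] := hom_on_extend sym1 irr1 sym2 col1 col2 cn deg_gt0 fhom falign.
by exists g.
Qed.

Theorem lemma6p5 (V1 V2 : finType) (e1 : rel V1) (e2 : rel V2)
  (X1 Y1 : {set V1}) (X2 Y2 : {set V2}) :
  simple_graph e1 -> simple_graph e2 ->
  connected_graph e1 -> connected_graph e2 ->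
  bipartition e1 X1 Y1 -> bipartition e2 X2 Y2 ->
  CHH e1 -> CHH e2 ->
  B2 e1 X1 Y1 -> B2 e2 X2 Y2 ->
  [/\ (max_deg e1 <= max_deg e2 -> CHH_morphic e1 e2),
      (max_deg e1 = max_deg e2 -> CHH_symmetric e1 e2) &
      (max_deg e2 < max_deg e1 -> B2star e2 X2 Y2 -> CHH_symmetric e1 e2)].
Proof.
move=> [sym1 irr1] [sym2 irr2] _ _ bip1 bip2 _ _ hB1 hB2.
have col1 := bipartition_bicolouring bip1.
have col2 := bipartition_bicolouring bip2.
have morphic12 : max_deg e1 <= max_deg e2 -> CHH_morphic e1 e2.
  move=> le12; apply: CHH_morphic_of_side_common_nbrs sym1 irr1 sym2 col1 col2 _.
  exact: side_common_nbrs_leq le12 (B2_side_common_nbrs bip2 hB2).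
have morphic21 : max_deg e2 <= max_deg e1 -> CHH_morphic e2 e1.
  move=> le21; apply: CHH_morphic_of_side_common_nbrs sym2 irr2 sym1 col2 col1 _.
  exact: side_common_nbrs_leq le21 (B2_side_common_nbrs bip1 hB1).
split=> [// | eq12 | lt21 hB2star]; split.
- by apply: morphic12; rewrite eq12.
- by apply: morphic21; rewrite eq12.
- apply: CHH_morphic_of_side_common_nbrs sym1 irr1 sym2 col1 col2 _.
  exact: B2star_side_common_nbrs bip2 hB2star (max_deg e1).
- exact/morphic21/ltnW.
Qed.
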